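(* Let $w\in W_n$ have first right descent at $k\geq0$, let $\gamma$ be its A-code, $m=\ell(\mu(w))$, $\beta=\beta(w)$, and for $s\geq1$ let $\phi_s:=\#\{i\in[1,k]\mid\gamma_i\geq s\}$. (a) If $\beta_{s+1}>\beta_s+1$, then $|\beta_s|$ is a left descent of $w$. (b) If $s\leq m$, then $\phi_s=k$, while if $s>m$ and $\beta_{s+1}=\beta_s+1$, then $\phi_s=\phi_{s+1}$.
   Context: $W_n$: signed permutations $w=(w_1,\ldots,w_n)$ of $\{1,\ldots,n\}$. $w$ has a right descent at $0$ iff $w_1<0$ and at $i\geq1$ iff $w_i>w_{i+1}$; the first right descent is the smallest such index. $w$ has a left descent at $0$ iff $-1$ is an entry of $w$, and at $i\geq1$ iff $w$ has one of the forms $(\cdots i{+}1\cdots i\cdots)$, $(\cdots i\cdots\overline{i{+}1}\cdots)$, $(\cdots\overline{i{+}1}\cdots i\cdots)$, $(\cdots\bar i\cdots\overline{i{+}1}\cdots)$, where $\bar a=-a$. A-code: $\gamma_i:=\#\{j>i\mid w_j<w_i\}$. $\mu(w)$ is the strict partition of absolute values of the negative entries. Listing $w_{k+1},\ldots,w_n$ increasingly as $u_1<\cdots<u_m<0<u_{m+1}<\cdots<u_{n-k}$, $\beta(w):=(u_1+1,\ldots,u_m+1,u_{m+1},\ldots,u_{n-k})$; indices $s$ in the statement satisfy $1\leq s<n-k$ where $\beta_{s+1}$ is referenced. *)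

From mathcomp Require Import all_boot all_order all_algebra.
Set Implicit Arguments. Unset Strict Implicit. Unset Printing Implicit Defensive.
Import Order.TTheory GRing.Theory Num.Theory.
Local Open Scope ring_scope.

Definition signed_perm (n : nat) (w : seq int) : bool :=
  (size w == n) && perm_eq (map absz w) (iota 1 n).

Definition ent (w : seq int) (i : nat) : int := nth 0 w i.-1.

Definition rdes (w : seq int) (i : nat) : bool :=
  if i == 0%N then ent w 1 < 0
  else (i < size w)%N && (ent w i.+1 < ent w i).

Definition first_rdes (w : seq int) (k : nat) : Prop :=
  rdes w k /\ forall i, (i < k)%N -> ~~ rdes w i.

Definition ldes (w : seq int) (i : nat) : bool :=
  if i == 0%N then (-1) \in w
  else
    let a : int := i%:Z in
    [exists p : 'I_(size w), exists q : 'I_(size w),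
      (p < q)%N &&
      [|| (w`_p == a + 1) && (w`_q == a),
          (w`_p == a) && (w`_q == - (a + 1)),
          (w`_p == - (a + 1)) && (w`_q == a)
        | (w`_p == - a) && (w`_q == - (a + 1))]].

Definition gamma (w : seq int) (i : nat) : nat :=
  count (fun x => x < ent w i) (drop i w).

Definition mu (w : seq int) : seq nat :=
  sort geq (map absz (filter (fun x => x < 0) w)).

Definition beta_seq (w : seq int) (k : nat) : seq int :=
  map (fun u => if u < 0 then u + 1 else u) (sort <=%R (drop k w)).

Definition beta (w : seq int) (k s : nat) : int := nth 0 (beta_seq w k) s.-1.

Definition phi (w : seq int) (k s : nat) : nat :=
  count (fun i => (s <= gamma w i)%N) (iota 1 k).

From mathcomp Require Import all_boot all_order all_algebra zify.
Set Implicit Arguments. Unset Strict Implicit. Unset Printing Implicit Defensive.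
Import Order.TTheory GRing.Theory Num.Theory.
Local Open Scope ring_scope.

(* Write u_1 < ... < u_{n-k} for the sorted tail w_{k+1}, ..., w_n, so that
   beta(w) is u with its negative entries raised by one.  Since w_1 < ... < w_k
   are positive, for i <= k we get gamma_i = #{j | u_j < w_i}, i.e.
   gamma_i >= s iff u_s < w_i.  All m negative entries of w are in the tail and
   below every w_i, so phi_s = k for s <= m.  For s > m, beta_{s+1} = beta_s + 1
   means u_{s+1} = u_s + 1, and no w_i with i <= k equals u_{s+1}, so u_s < w_i
   iff u_{s+1} < w_i.  For (a), no tail entry lies strictly between u_s and
   u_{s+1}, so a value of the gap occurring in w occurs in the prefix, hence
   positively.  With a = |beta_s| this puts either a and -(a+1) in w, or a+1
   before a, both left-descent patterns at a (or -1 in w when a = 0). *)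

Section SortedNth.
Variables (d : Order.disp_t) (T : orderType d) (x0 : T).
Implicit Types (s : seq T) (x : T).

Lemma nth_count_ltE s x i : sorted <=%O s -> (i < size s)%N ->
  (nth x0 s i < x)%O = (i < count (fun y => y < x)%O s)%N.
Proof.
move=> ss lti; apply/idP/idP => [|/(nth_count_lt x0 ss)//].
apply: contraTT; rewrite -leqNgt -leNgt => le_c.
by apply: nth_count_ge => //; apply/andP; split.
Qed.

Lemma sorted_nth_succ_le s x i : sorted <=%O s -> (i < size s)%N -> x \in s ->
  (nth x0 s i < x)%O -> (nth x0 s i.+1 <= x)%O.
Proof.
move=> ss lti xs; rewrite (nth_count_ltE _ ss lti) => lt_ic.
by apply: nth_count_le => //; apply: (leq_ltn_trans lt_ic); rewrite count_lt_le_mem.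
Qed.

End SortedNth.

Lemma mem_drop_index (T : eqType) (s : seq T) x i : uniq s -> x \in s ->
  (x \in drop i s) = (i <= index x s)%N.
Proof.
move=> us xs; rewrite leqNgt -in_take //.
move: us xs; rewrite -{1 2}(cat_take_drop i s) cat_uniq mem_cat => /and3P[_ /hasPn dis _].
case/orP=> [xt|xd]; last by rewrite xd (negbTE (dis x xd)).
by rewrite xt; apply/negP => /dis; rewrite xt.
Qed.

Lemma count_lt_nth_succ (s : seq int) j (x : int) : sorted <=%R s -> (j.+1 < size s)%N ->
  s`_j.+1 = s`_j + 1 -> x \notin s ->
  (j < count (fun y => (y < x)%R) s)%N = (j.+1 < count (fun y => (y < x)%R) s)%N.
Proof.
move=> ss lt_js eq_succ xs.
rewrite -!(nth_count_ltE 0 _ ss) ?(ltnW lt_js) // eq_succ.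
have : x != s`_j + 1 by rewrite -eq_succ; apply: contraNneq xs => ->; exact: mem_nth.
by move=> ne; rewrite -lezD1 le_eqVlt eq_sym (negbTE ne).
Qed.

Section SignedPerm.
Variables (n : nat) (w : seq int).
Hypothesis w_sp : signed_perm n w.

Lemma signed_perm_size : size w = n.
Proof. by case/andP: w_sp => /eqP. Qed.

Lemma signed_perm_uniq : uniq w.
Proof.
case/andP: w_sp => _ /perm_uniq eq_u.
by apply: (@map_uniq _ _ absz); rewrite eq_u iota_uniq.
Qed.

Lemma signed_perm_abs x : x \in w -> (0 < `|x| <= n)%N.
Proof.
case/andP: w_sp => _ /perm_mem eq_m xw.
by have := map_f absz xw; rewrite eq_m mem_iota; lia.
Qed.

Lemma signed_perm_mem_abs (a : nat) : (0 < a <= n)%N -> (a%:Z \in w) || (- a%:Z \in w).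
Proof.
case/andP: w_sp => _ /perm_mem eq_m a_range.
have : a \in map absz w by rewrite eq_m mem_iota; lia.
case/mapP=> x xw ->.
have [ex|ex] : (absz x)%:Z = x \/ - (absz x)%:Z = x by lia.
  by rewrite ex xw.
by rewrite ex xw orbT.
Qed.

End SignedPerm.

Lemma ldes_index (w : seq int) (a : nat) x y : (0 < a)%N ->
  (index x w < index y w)%N -> y \in w ->
  [|| (x == a%:Z + 1) && (y == a%:Z), (x == a%:Z) && (y == - (a%:Z + 1)),
      (x == - (a%:Z + 1)) && (y == a%:Z) | (x == - a%:Z) && (y == - (a%:Z + 1))] ->
  ldes w a.
Proof.
move=> a_gt0 lt_xy yw pat; rewrite /ldes; case: eqP => [a0|_ /=].
  by move: a_gt0; rewrite a0.
have xw : x \in w by rewrite -index_mem (ltn_trans lt_xy) ?index_mem.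
apply/existsP; exists (Ordinal (etrans (index_mem x w) xw)).
apply/existsP; exists (Ordinal (etrans (index_mem y w) yw)).
by rewrite /= lt_xy !nth_index.
Qed.

Lemma ldes_pos_neg (w : seq int) (a : nat) : (0 < a)%N ->
  a%:Z \in w -> - (a%:Z + 1) \in w -> ldes w a.
Proof.
move=> a_gt0 aw na_w.
have [lt|lt|eq] := ltngtP (index a%:Z w) (index (- (a%:Z + 1)) w).
- by apply: (ldes_index a_gt0 lt) => //; rewrite !eqxx /= !orbT.
- by apply: (ldes_index a_gt0 lt) => //; rewrite !eqxx /= !orbT.
- by move/(congr1 (nth 0 w)): eq; rewrite !nth_index //; lia.
Qed.

Lemma ldes_succ_before (w : seq int) (a : nat) : (0 < a)%N -> a%:Z \in w ->
  (index (a%:Z + 1)%R w < index a%:Z w)%N -> ldes w a.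
Proof. by move=> a_gt0 aw lt; apply: (ldes_index a_gt0 lt aw); rewrite !eqxx. Qed.

Section FirstRightDescent.
Variables (w : seq int) (k : nat).
Hypothesis w_k : first_rdes w k.

Local Notation tail := (drop k w).
Local Notation stail := (sort <=%R (drop k w)).

Lemma first_rdes_lt_size : (k < size w)%N.
Proof.
case: w_k => + _; rewrite /rdes /ent; case: eqP => [->|_ /andP[] //].
by case: (w).
Qed.

Lemma first_rdes_prefix_sorted : sorted <=%R (take k w).
Proof.
apply/(sortedP 0) => i; rewrite size_take_min leq_min => /andP[lt_k lt_sz].
have := w_k.2 _ lt_k; rewrite /rdes /ent /= lt_sz /= -leNgt.
by rewrite !nth_take // ltnW.
Qed.

Lemma first_rdes_prefix_ge0 x : x \in take k w -> 0 <= x.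
Proof.
move=> /(nthP 0)[j lt_j <-].
have lt_0 : (0 < size (take k w))%N := leq_ltn_trans (leq0n j) lt_j.
have w0_ge0 : 0 <= (take k w)`_0.
  move: lt_0; rewrite size_take_min leq_min => /andP[lt_0k _].
  by have := w_k.2 _ lt_0k; rewrite nth_take // /rdes /ent /= -leNgt.
apply: (le_trans w0_ge0); apply: (sorted_leq_nth le_trans lexx 0 first_rdes_prefix_sorted) => //.
Qed.

Lemma nth_mem_prefix j : (j < k)%N -> w`_j \in take k w.
Proof.
move=> lt_jk; rewrite -(nth_take 0 lt_jk) mem_nth // size_take_min leq_min lt_jk.
by rewrite (ltn_trans lt_jk first_rdes_lt_size).
Qed.

Lemma neg_mem_tail x : x \in w -> x < 0 -> x \in tail.
Proof.
rewrite -{1}(cat_take_drop k w) mem_cat => /orP[/first_rdes_prefix_ge0|//].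
by move=> /le_gtF ->.
Qed.

Lemma count_neg_stail : count (fun y => y < 0) stail = size (mu w).
Proof.
rewrite /mu size_sort size_map size_filter count_sort -[in RHS](cat_take_drop k w).
rewrite count_cat [count _ (take _ _)](eq_in_count (a2 := pred0)) ?count_pred0 //.
by move=> x /first_rdes_prefix_ge0 /le_gtF.
Qed.

Lemma gamma_prefix i : (0 < i <= k)%N ->
  gamma w i = count (fun y => y < w`_i.-1) stail.
Proof.
move=> /andP[i_gt0 le_ik]; rewrite /gamma /ent count_sort.
rewrite -[drop i w](cat_take_drop (k - i)) take_drop drop_drop subnK // count_cat.
have lt_i : (i.-1 < size (take k w))%N.
  by rewrite size_take_min leq_min prednK // le_ik (leq_trans le_ik (ltnW first_rdes_lt_size)).
have := drop_sorted i.-1 first_rdes_prefix_sorted.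
rewrite (drop_nth 0 lt_i) prednK // nth_take; last by rewrite prednK.
move=> /(order_path_min le_trans) /allP ge_wi.
rewrite (eq_in_count (a2 := pred0)) ?count_pred0 // => y /ge_wi.
by rewrite leNgt => /negbTE.
Qed.

Lemma phi_neg_range s : (s <= size (mu w))%N -> phi w k s = k.
Proof.
move=> le_sm; rewrite /phi -[RHS](size_iota 1 k) -count_predT.
apply: eq_in_count => i; rewrite mem_iota => i_range /=.
rewrite gamma_prefix; last lia.
apply: (leq_trans le_sm); rewrite -count_neg_stail; apply: sub_count => y /= y_lt0.
apply: (lt_le_trans y_lt0); apply: first_rdes_prefix_ge0; apply: nth_mem_prefix; lia.
Qed.

End FirstRightDescent.

Definition beta_shift (x : int) : int := if x < 0 then x + 1 else x.

Lemma beta_shift_gap (y z : int) : beta_shift y + 1 < beta_shift z -> y + 1 < z.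
Proof. by rewrite /beta_shift; do 2 case: ifP; lia. Qed.

Section SignedPermTail.
Variables (n k : nat) (w : seq int).
Hypotheses (w_sp : signed_perm n w) (w_k : first_rdes w k).

Local Notation tail := (drop k w).
Local Notation stail := (sort <=%R (drop k w)).

Lemma size_stail : size stail = (n - k)%N.
Proof. by rewrite size_sort size_drop (signed_perm_size w_sp). Qed.

Lemma prefix_notin_tail x : x \in take k w -> x \notin tail.
Proof.
move=> xp; have := signed_perm_uniq w_sp.
rewrite -{1}(cat_take_drop k w) cat_uniq => /and3P[_ /hasPn dis _].
by apply/negP => /dis; rewrite xp.
Qed.

Lemma betaE s : (0 < s <= n - k)%N -> beta w k s = beta_shift stail`_s.-1.
Proof. by move=> s_range; rewrite /beta /beta_seq (nth_map 0) // size_stail; lia. Qed.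

Lemma phi_succ s : (size (mu w) < s)%N -> (s < n - k)%N ->
  beta w k s.+1 = beta w k s + 1 -> phi w k s = phi w k s.+1.
Proof.
case: s => // s lt_ms lt_sn; rewrite !betaE /=; try lia.
have stail_ge0 j : (size (mu w) <= j < n - k)%N -> 0 <= stail`_j.
  by rewrite -(count_neg_stail w_k) -size_stail => j_range; apply: nth_count_ge.
rewrite /beta_shift !ltNge !stail_ge0 /=; try lia.
move=> eq_succ; apply: eq_in_count => i; rewrite mem_iota => i_range /=.
rewrite (gamma_prefix w_k); last lia.
apply: count_lt_nth_succ (sort_le_sorted _) _ _ _; rewrite ?size_stail //.
by rewrite mem_sort prefix_notin_tail // (nth_mem_prefix w_k) //; lia.
Qed.

Lemma ldes_gap_neg (y z : int) : y \in tail -> (forall v, v \in tail -> y < v -> z <= v) ->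
  y < 0 -> y + 1 < z -> ldes w (absz (y + 1)).
Proof.
move=> yt gap y_lt0 lt_yz; have yw := mem_drop yt.
have [y_eq|y_neq] := eqVneq y (-1).
  by rewrite y_eq /ldes /= -y_eq.
have a_gt0 : (0 < absz (y + 1)%R)%N by lia.
apply: ldes_pos_neg => //; last by rewrite (_ : - ((absz (y + 1))%:Z + 1) = y) //; lia.
have a_range : (0 < absz (y + 1)%R <= n)%N by have := signed_perm_abs w_sp yw; lia.
have /orP[//|na_w] := signed_perm_mem_abs w_sp a_range.
have := gap _ (neg_mem_tail w_k na_w _); lia.
Qed.

Lemma ldes_gap_pos (y z : int) : y \in tail -> z \in tail ->
  (forall v, v \in tail -> y < v -> z <= v) -> 0 <= y -> y + 1 < z -> ldes w `|y|%N.
Proof.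
move=> yt zt gap y_ge0 lt_yz; have yw := mem_drop yt; have zw := mem_drop zt.
have ey : y = `|y|%:Z by lia.
have aw : `|y|%:Z \in w by rewrite -ey.
have a_gt0 : (0 < `|y|)%N by have := signed_perm_abs w_sp yw; lia.
have a_range : (0 < `|y|.+1 <= n)%N by have := signed_perm_abs w_sp zw; lia.
have /orP[sw|nw] := signed_perm_mem_abs w_sp a_range.
- have {}sw : `|y|%:Z + 1 \in w by rewrite -PoszD addn1.
  have [lt|gt|eq] := ltngtP (index (`|y|%:Z + 1) w) (index `|y|%:Z w).
  + exact: ldes_succ_before.
  + have : `|y|%:Z + 1 \in tail.
      rewrite mem_drop_index ?(signed_perm_uniq w_sp) //.
      by apply: ltnW (leq_ltn_trans _ gt); rewrite -mem_drop_index -?ey ?(signed_perm_uniq w_sp).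
    by move/gap; lia.
  + by exfalso; move/(congr1 (nth 0 w)): eq; rewrite !nth_index //; lia.
- by apply: ldes_pos_neg; rewrite // (_ : - _ = - (`|y|.+1)%:Z) //; lia.
Qed.

Lemma ldes_beta_gap s : (0 < s)%N -> (s < n - k)%N ->
  beta w k s + 1 < beta w k s.+1 -> ldes w `|beta w k s|%N.
Proof.
case: s => // s _ lt_sn; rewrite !betaE /=; try lia.
have lt_s : (s.+1 < size stail)%N by rewrite size_stail.
have mem_tail j : (j < size stail)%N -> stail`_j \in tail.
  by move=> lt_j; rewrite -(mem_sort <=%R) mem_nth.
have gap v : v \in tail -> stail`_s < v -> stail`_s.+1 <= v.
  by rewrite -(mem_sort <=%R) => vs; apply: sorted_nth_succ_le (sort_le_sorted _) _ vs; apply: ltnW.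
move=> /beta_shift_gap lt_yz; rewrite /beta_shift; case: ifP => [y_lt0|/negbT y_ge0].
- exact: ldes_gap_neg (mem_tail _ (ltnW lt_s)) gap y_lt0 lt_yz.
- by apply: ldes_gap_pos (mem_tail _ (ltnW lt_s)) (mem_tail _ lt_s) gap _ lt_yz; rewrite leNgt.
Qed.

End SignedPermTail.

Theorem lemma11 (n : nat) (w : seq int) (k : nat) :
  signed_perm n w -> first_rdes w k ->
  let m := size (mu w) in
  (forall s : nat, (1 <= s)%N -> (s < n - k)%N ->
     beta w k s.+1 > beta w k s + 1 -> ldes w `|beta w k s|%N) /\
  (forall s : nat, (1 <= s)%N -> (s <= m)%N -> phi w k s = k) /\
  (forall s : nat, (m < s)%N -> (s < n - k)%N ->
     beta w k s.+1 = beta w k s + 1 -> phi w k s = phi w k s.+1).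
Proof.
move=> w_sp w_k m; split; [|split].
- exact: ldes_beta_gap w_sp w_k.
- by move=> s _ le_sm; apply: phi_neg_range w_k s le_sm.
- exact: phi_succ w_sp w_k.
Qed.
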